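(* Let $G$ be a finite group with $|G|\ge 4$, $\sigma$ an automorphism of $G$ of order two, and $S$ a symmetric subset of $G$ closed under conjugation. Let $\rho_1,\dots,\rho_r$ be the irreducible complex representations of $G$ with characters $\chi_1,\dots,\chi_r$, and let $\lambda_i=\frac{1}{\dim\rho_i}\sum_{s\in S}\chi_i(s)$. (1) Up to factors of $\pm1$, the eigenvalues of the adjacency operator of the Cayley sum graph $C_\Sigma(G,S)$ are the numbers $\lambda_i$, each occurring with multiplicity $(\dim\rho_i)^2$, $1\le i\le r$. (2) If $\sigma(S)=S$, then up to factors of $\pm1$, the eigenvalues of the adjacency operator of the twisted Cayley graph $C(G,S)^\sigma$ are the numbers $\lambda_i$, each occurring with multiplicity $(\dim\rho_i)^2$. (3) If $\sigma(S)=S$, then up to factors of $\pm1$, the eigenvalues of the adjacency operator of the twisted Cayley sum graph $C_\Sigma(G,S)^\sigma$ are the numbers $\lambda_i$, each occurring with multiplicity $(\dim\rho_i)^2$. Moreover, the number of factors equal to $1$ in (1) (resp. (2), (3)) equals the average of $|G|$ and the number of solutions $g\in G$ of $g=g^{-1}$ (resp. $g=\sigma(g)$, $g=\sigma(g)^{-1}$).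
   Context: For a finite group $G$, an automorphism $\sigma$ and a subset $S$: $C(G,S)$ has vertex set $G$ and an edge from $x$ to $xs$ for each $s\in S$; $C_\Sigma(G,S)$ has an edge from $x$ to $x^{-1}s$; $C(G,S)^\sigma$ has an edge from $x$ to $\sigma(xs)$; $C_\Sigma(G,S)^\sigma$ has an edge from $x$ to $\sigma(x^{-1}s)$. ''Up to factors of $\pm1$'' means there is a bijection between the two multisets of eigenvalues under which each eigenvalue is sent to itself or its negative; the ''factors of $1$'' are those matched with themselves. *)

From HB Require Import structures.
From mathcomp Require Import all_boot all_order all_algebra all_fingroup all_solvable all_field all_character.
Set Implicit Arguments. Unset Strict Implicit. Unset Printing Implicit Defensive.
Import Order.TTheory GRing.Theory Num.Theory.
Local Open Scope ring_scope.

Section Defs.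
Variable gT : finGroupType.

Definition vtx (i : 'I_#|gT|) : gT := enum_val i.

Definition adjmx (f : gT -> gT -> gT) (S : {set gT}) : 'M[algC]_#|gT| :=
  \matrix_(i, j) (#|[set s in S | vtx j == f (vtx i) s]|)%:R.

Definition cay_edge (x s : gT) : gT := (x * s)%g.
Definition caysum_edge (x s : gT) : gT := (x^-1 * s)%g.
Definition tcay_edge (sigma : {perm gT}) (x s : gT) : gT := sigma (x * s)%g.
Definition tcaysum_edge (sigma : {perm gT}) (x s : gT) : gT := sigma (x^-1 * s)%g.

Definition lam (S : {set gT}) (i : Iirr [set: gT]) : algC :=
  (\sum_(s in S) 'chi_i s) / 'chi_i 1%g.

Definition irr_mult_seq : seq (Iirr [set: gT]) :=
  flatten [seq nseq (Num.truncn ('chi_i 1%g) ^ 2)%N i | i <- enum (Iirr [set: gT])].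

(* "Up to factors of +-1 the eigenvalues of A are the lambda_i, each with
   multiplicity (dim rho_i)^2, and the number of factors equal to 1 is N/2":
   there are signs eps (true = +1, false = -1), one per element of the
   multiset, such that the eigenvalue multiset of A (roots of its
   characteristic polynomial, with multiplicity) is {eps_k * lambda_(m_k)},
   and twice the number of +1 signs is N. *)
Definition pm_spectrum (A : 'M[algC]_#|gT|) (S : {set gT}) (N : nat) : Prop :=
  exists eps : seq bool,
    size eps = size irr_mult_seq /\
    char_poly A = \prod_(p <- zip eps irr_mult_seq)
                    ('X - ((-1) ^+ (~~ p.1) * lam S p.2)%:P) /\
    (2 * count id eps)%N = N.

End Defs.

(* Let T be the adjacency matrix of the Cayley graph x -> xs.  Since S is a
   union of conjugacy classes, T is right convolution by the class function
   1_S, so T = sum_i lambda_i E_i, where E_i is the isotypic projection of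
   chi_i in the regular representation, of rank chi_i(1)^2.  Each of the
   three graphs has adjacency matrix Q T, with Q the permutation matrix of an
   involution pi of G that is an automorphism or an anti-automorphism
   preserving S (inversion, sigma, and inversion after sigma).  Conjugation
   by Q permutes the E_i along an involution tau of the irreducible
   characters that fixes the lambda_i, and Q commutes with T.  On the range
   of E_i with tau i = i, Q T = lambda_i Q has eigenvalues +-lambda_i; on
   E_i + E_(tau i) with tau i <> i, Q swaps the two summands, so lambda_i
   and -lambda_i each occur rank E_i times.  Comparing traces, twice the
   number of + signs is |G| + tr Q = |G| + #{g | g = pi g}. *)

From HB Require Import structures.
From mathcomp Require Import all_boot all_order all_algebra all_fingroup all_solvable all_field all_character.
From mathcomp.algebra_tactics Require Import ring.
Import Order.TTheory GRing.Theory Num.Theory.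
Local Open Scope ring_scope.
Set Implicit Arguments. Unset Strict Implicit. Unset Printing Implicit Defensive.

Section IdempotentMatrix.
Variables (F : fieldType) (n : nat).
Implicit Type G : 'M[F]_n.

Lemma pid_mx_mulE r (X : 'M[F]_n) i j :
  (pid_mx r *m X) i j = if (i < r)%N then X i j else 0.
Proof.
rewrite mxE (bigD1 i) //= big1 ?addr0 => [|k nki].
  by rewrite mxE eqxx; case: ifP; rewrite ?mul1r ?mul0r.
by rewrite mxE eq_sym (negbTE (nki : k != i :> nat)) mul0r.
Qed.

Lemma mul_pid_mxE r (X : 'M[F]_n) i j :
  (X *m pid_mx r) i j = if (j < r)%N then X i j else 0.
Proof.
rewrite mxE (bigD1 j) //= big1 ?addr0 => [|k nkj].
  by rewrite mxE eqxx; case: ifP; rewrite ?mulr1 ?mulr0.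
by rewrite mxE (negbTE (nkj : k != j :> nat)) mulr0.
Qed.

(* The Gaussian elimination G = L pid_r U makes G similar to K = pid_r (U L),
   and idempotence reads K pid_r = pid_r: K is block upper triangular with
   diagonal blocks 1 and 0. *)
Lemma idempotent_similar_trig G : G *m G = G ->
  exists L K, [/\ L \in unitmx, G = L *m K *m invmx L,
    forall i j : 'I_n, (j < i)%N -> K i j = 0 &
    forall i : 'I_n, K i i = ((i < \rank G)%N)%:R].
Proof.
move=> GG; set r := \rank G; set L := col_ebase G; set U := row_ebase G.
have eG : L *m pid_mx r *m U = G := mulmx_ebase G.
have uL : L \in unitmx := col_ebase_unit G.
have uU : U \in unitmx := row_ebase_unit G.
have pid_idem : pid_mx r *m (U *m L) *m pid_mx r = pid_mx r :> 'M[F]_n.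
  have := congr1 (fun X => invmx L *m X *m invmx U) GG.
  by rewrite -eG /= -!mulmxA mulKmx // mulmxV // mulmx1 mulKmx // mulmxV // mulmx1.
have pidE (i j : 'I_n) : (j < r)%N -> (pid_mx r *m (U *m L)) i j = (pid_mx r : 'M[F]_n) i j.
  by move=> jr; rewrite -[in RHS]pid_idem mul_pid_mxE jr.
exists L, (pid_mx r *m (U *m L)); split => //.
- by rewrite !mulmxA mulmxK // eG.
- move=> i j ji; case: (ltnP i r) => ir; last by rewrite pid_mx_mulE ltnNge ir.
  by rewrite pidE ?(ltn_trans ji ir) // mxE (gtn_eqF ji).
- move=> i; case: (ltnP i r) => ir; last by rewrite pid_mx_mulE ltnNge ir.
  by rewrite pidE // mxE eqxx ir.
Qed.

Lemma mxtrace_idempotent G : G *m G = G -> \tr G = (\rank G)%:R.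
Proof.
move=> /idempotent_similar_trig[L [K [uL eG _ diagK]]].
rewrite [in LHS]eG mxtrace_mulC mulmxA mulVmx // mul1mx /mxtrace.
under eq_bigr do rewrite diagK.
by rewrite -natr_sum -big_mkcond (big_ord_narrow (rank_leq_row G)) sum1_card card_ord.
Qed.

Lemma det_add1_idempotent (R : comNzRingType) (f : {rmorphism F -> R}) G (c : R) :
  G *m G = G -> \det (1%:M + c *: map_mx f G) = (1 + c) ^+ \rank G.
Proof.
move=> /idempotent_similar_trig[L [K [uL eG lowK diagK]]].
have LinvL : map_mx f L *m map_mx f (invmx L) = 1%:M.
  by rewrite -map_mxM mulmxV // map_mx1.
have -> : 1%:M + c *: map_mx f G
    = map_mx f L *m (1%:M + c *: map_mx f K) *m map_mx f (invmx L).
  by rewrite mulmxDr mulmxDl mulmx1 LinvL -scalemxAr -scalemxAl eG !map_mxM.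
rewrite !det_mulmx mulrAC -det_mulmx LinvL det1 mul1r -det_tr det_trig; last first.
  apply/is_trig_mxP => i j ij.
  by rewrite !mxE (lowK _ _ ij) rmorph0 mulr0 addr0 -val_eqE /= (gtn_eqF ij).
rewrite (eq_bigr (fun i : 'I_n => if (i < \rank G)%N then 1 + c else 1)); last first.
  by move=> i _; rewrite !mxE eqxx diagK; case: ifP; rewrite ?rmorph1 ?rmorph0 ?mulr1 ?mulr0 ?addr0.
by rewrite -big_mkcond (big_ord_narrow (rank_leq_row G)) prodr_const card_ord.
Qed.
End IdempotentMatrix.

Section OrthogonalIdempotents.
Variables (F : fieldType) (n : nat) (K : finType) (G : K -> 'M[F]_n).
Hypothesis G_orth : forall k l, G k *m G l = if k == l then G k else 0.
Hypothesis G_sum : \sum_k G k = 1%:M.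

(* Adding a to s multiplies the matrix by 1 + (c a - 1) G a, as G a is
   orthogonal to the other G k. *)
Lemma det_sum_orth_idem_seq (R : comNzRingType) (f : {rmorphism F -> R})
    (c : K -> R) (s : seq K) : uniq s ->
  \det (\sum_k (if k \in s then c k else 1) *: map_mx f (G k))
    = \prod_(k <- s) c k ^+ \rank (G k).
Proof.
elim: s => [_|a s IHs] /=.
  under eq_bigr do rewrite scale1r.
  by rewrite -raddf_sum /= G_sum map_mx1 det1 big_nil.
case/andP => /negbTE a_notin_s uniq_s; rewrite big_cons -IHs //.
have Ga_idem : G a *m G a = G a by rewrite G_orth eqxx.
have -> : c a ^+ \rank (G a) = \det (1%:M + (c a - 1) *: map_mx f (G a)).
  by rewrite det_add1_idempotent // addrC subrK.
rewrite -det_mulmx.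
have cross : \sum_k map_mx f (G a) *m ((if k \in s then c k else 1) *: map_mx f (G k))
    = map_mx f (G a).
  rewrite (bigD1 a) //= a_notin_s scale1r -map_mxM Ga_idem big1 ?addr0 // => k /negbTE nka.
  by rewrite -scalemxAr -map_mxM G_orth eq_sym nka raddf0 scaler0.
congr (\det _); rewrite mulmxDl mul1mx -scalemxAl mulmx_sumr cross.
rewrite (bigD1 a) //= [in RHS](bigD1 a) //= inE eqxx a_notin_s /= scale1r.
have scale_ca (X : 'M[R]_n) : X + (c a - 1) *: X = c a *: X.
  by rewrite -{1}[X]scale1r -scalerDl addrC subrK.
rewrite [RHS]addrAC scale_ca; congr (_ + _).
by apply: eq_bigr => k nka; rewrite inE (negbTE nka).
Qed.

Lemma det_sum_orth_idem (R : comNzRingType) (f : {rmorphism F -> R}) (c : K -> R) :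
  \det (\sum_k c k *: map_mx f (G k)) = \prod_k c k ^+ \rank (G k).
Proof.
have := det_sum_orth_idem_seq f c (enum_uniq K); rewrite big_enum /= => <-.
by congr (\det _); apply: eq_bigr => k _; rewrite mem_enum.
Qed.

Lemma char_poly_sum_orth_idem (mu : K -> F) :
  char_poly (\sum_k mu k *: G k) = \prod_k ('X - (mu k)%:P) ^+ \rank (G k).
Proof.
rewrite -(det_sum_orth_idem (@polyC F)) /char_poly /char_poly_mx; congr (\det _).
rewrite -scalemx1 -(map_mx1 (@polyC F)) -G_sum !raddf_sum /= -big_split.
by apply: eq_bigr => k _; rewrite map_mxZ /= scalerBl.
Qed.
End OrthogonalIdempotents.

Lemma big_pair_bool (R : Type) (idx : R) (op : Monoid.com_law idx) (J : finType)
    (F : J * bool -> R) :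
  \big[op/idx]_k F k = \big[op/idx]_i op (F (i, true)) (F (i, false)).
Proof.
rewrite (eq_bigr (fun k => F (k.1, k.2))) => [|[] //].
rewrite -(pair_bigA _ (fun i b => F (i, b))) /=.
by apply: eq_bigr => i _; rewrite big_bool.
Qed.

Section SignedSpectrum.
Variables (F : numFieldType) (n : nat) (J : finType).
Variables (E : J -> 'M[F]_n) (tau : J -> J) (Q : 'M[F]_n) (lam : J -> F).
Hypothesis E_orth : forall i j, E i *m E j = if i == j then E i else 0.
Hypothesis E_sum : \sum_i E i = 1%:M.
Hypothesis tauK : involutive tau.
Hypothesis QQ : Q *m Q = 1%:M.
Hypothesis QE : forall i, Q *m E i = E (tau i) *m Q.
Hypothesis lam_tau : forall i, lam (tau i) = lam i.

Lemma mxtrace_E_tau i : \tr (E (tau i)) = \tr (E i).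
Proof. by rewrite -[E _]mulmx1 -QQ mulmxA -QE mxtrace_mulC mulmxA QQ mul1mx. Qed.

Lemma mxtrace_E_Q i : tau i != i -> \tr (E i *m Q) = 0.
Proof.
move=> /negbTE tau_i.
have -> : E i *m Q = E i *m (E i *m Q) by rewrite mulmxA E_orth eqxx.
by rewrite mxtrace_mulC -mulmxA QE mulmxA E_orth eq_sym tau_i mul0mx mxtrace0.
Qed.

Lemma sum_E_mul (A B : {set J}) :
  (\sum_(k in A) E k) *m (\sum_(l in B) E l) = \sum_(k in A :&: B) E k.
Proof.
rewrite mulmx_suml [RHS]big_mkcond [LHS]big_mkcond /=; apply: eq_bigr => k _.
rewrite in_setI; case: (k \in A) => //=; rewrite mulmx_sumr.
under eq_bigr do rewrite E_orth.
case: ifP => kB; last by rewrite big1 // => l lB; case: eqP => // kl; rewrite kl lB in kB.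
by rewrite (bigD1 k) //= eqxx big1 ?addr0 // => l /andP[_ /negbTE]; rewrite eq_sym => ->.
Qed.

Definition orbit_tau i : {set J} := [set i; tau i].

Lemma orbit_tau_eq i j : j \in orbit_tau i -> orbit_tau j = orbit_tau i.
Proof. by rewrite !inE => /orP[]/eqP-> //; rewrite /orbit_tau tauK setUC. Qed.

Lemma mem_orbit_tau i : i \in orbit_tau i.
Proof. by rewrite !inE eqxx. Qed.

Lemma orbit_tau_tau i k : (tau k \in orbit_tau i) = (k \in orbit_tau i).
Proof. by rewrite !inE !(can2_eq tauK tauK) tauK orbC. Qed.

Lemma orbit_tauI i j :
  orbit_tau i :&: orbit_tau j = if j \in orbit_tau i then orbit_tau i else set0.
Proof.
case: ifP => ji; first by rewrite (orbit_tau_eq ji) setIid.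
apply/setP => k; rewrite in_setI in_set0; apply/negP => /andP[ki kj].
by rewrite -(orbit_tau_eq ki) (orbit_tau_eq kj) mem_orbit_tau in ji.
Qed.

Definition orbit_proj i := \sum_(k in orbit_tau i) E k.

Lemma orbit_proj_mul i j :
  orbit_proj i *m orbit_proj j = if j \in orbit_tau i then orbit_proj i else 0.
Proof. by rewrite sum_E_mul orbit_tauI; case: ifP; rewrite ?big_set0. Qed.

Lemma orbit_proj_fixed i : tau i == i -> orbit_proj i = E i.
Proof. by move=> /eqP fix_i; rewrite /orbit_proj /orbit_tau fix_i setUid big_set1. Qed.

Lemma orbit_proj_moved i : tau i != i -> orbit_proj i = E i + E (tau i).
Proof.
by move=> moved; rewrite /orbit_proj (big_setU1 i) ?big_set1 // inE eq_sym.
Qed.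

Lemma Q_orbit_proj i : Q *m orbit_proj i = orbit_proj i *m Q.
Proof.
rewrite mulmx_sumr mulmx_suml (reindex_inj (can_inj tauK)) /=.
by apply: eq_big => [k|k _]; rewrite ?orbit_tau_tau // QE tauK.
Qed.

Definition Q_proj (b : bool) := 2^-1 *: (1%:M + (-1) ^+ (~~ b) *: Q).

Lemma Q_Q_proj b : Q *m Q_proj b = (-1) ^+ (~~ b) *: Q_proj b.
Proof.
rewrite -scalemxAr scalerA mulrC -scalerA mulmxDr mulmx1 -scalemxAr QQ; congr (_ *: _).
by rewrite scalerDr scalerA -expr2 sqrr_sign scale1r addrC.
Qed.

Lemma Q_proj_sum : Q_proj true + Q_proj false = 1%:M.
Proof.
rewrite /Q_proj /= expr0 expr1 scale1r scaleN1r -scalerDr addrACA subrr addr0.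
by rewrite -mulr2n -scaler_nat scalerA mulVf ?pnatr_eq0 // scale1r.
Qed.

Lemma Q_proj_mul b c : Q_proj b *m Q_proj c = if b == c then Q_proj b else 0.
Proof.
rewrite [X in X *m _]/Q_proj -scalemxAl mulmxDl mul1mx -scalemxAl Q_Q_proj scalerA.
rewrite -[X in X + _]scale1r -scalerDl.
case: b; case: c; rewrite /= ?expr0 ?expr1 ?mulN1r ?opprK ?mul1r ?subrr ?scale0r ?scaler0 //;
  by rewrite scalerA -mulr2n mulVf ?pnatr_eq0 ?scale1r.
Qed.

Lemma orbit_proj_Q_proj i b : orbit_proj i *m Q_proj b = Q_proj b *m orbit_proj i.
Proof.
by rewrite -scalemxAl -scalemxAr mulmxDr mulmxDl mulmx1 mul1mx -scalemxAr -scalemxAl Q_orbit_proj.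
Qed.

(* On a two-element tau-orbit, keep gives the sign + to the element with the
   smaller enum_rank and - to the other one; a fixed point keeps both signs. *)
Definition keep i b := (tau i == i) || (b == (enum_rank i < enum_rank (tau i))%N).

Lemma keep_tau i b : tau i != i -> keep (tau i) b = ~~ keep i b.
Proof.
move=> moved; rewrite /keep tauK [i == _]eq_sym (negbTE moved) /=.
have /negbTE ne : (enum_rank i : nat) != enum_rank (tau i).
  by apply: contra moved => /eqP/val_inj/enum_rank_inj <-.
by rewrite ltnNge leq_eqVlt ne; case: b; case: (_ < _)%N.
Qed.

Lemma sum_keep (c : J -> F) b : (forall i, c (tau i) = c i) ->
  \sum_i (if keep i b then c i *: orbit_proj i else 0) = \sum_i c i *: E i.
Proof.
move=> c_tau.
have -> : \sum_i (if keep i b then c i *: orbit_proj i else 0)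
  = \sum_i (if keep i b then c i *: E i else 0)
  + \sum_i (if keep i b && (tau i != i) then c i *: E (tau i) else 0).
  rewrite -big_split /=; apply: eq_bigr => i _.
  have [fixed|moved] := eqVneq (tau i) i.
    by rewrite orbit_proj_fixed ?fixed // andbF addr0.
  by rewrite orbit_proj_moved // andbT; case: ifP; rewrite ?scalerDr ?addr0.
rewrite [X in _ + X](reindex_inj (can_inj tauK)) -big_split /=.
apply: eq_bigr => i _; rewrite tauK [i == _]eq_sym.
have [fixed|moved] := eqVneq (tau i) i; first by rewrite /keep fixed eqxx /= andbF addr0.
by rewrite andbT keep_tau // c_tau; case: (keep i b); rewrite ?addr0 ?add0r.
Qed.

Lemma keep_orbit_tau i j b : keep i b -> keep j b -> j \in orbit_tau i -> j = i.
Proof.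
move=> keep_i keep_j; rewrite !inE => /orP[/eqP // | /eqP ji].
have [fixed|moved] := eqVneq (tau i) i; first by rewrite ji fixed.
by move: keep_j; rewrite ji keep_tau // keep_i.
Qed.

Definition signed_proj (k : J * bool) :=
  if keep k.1 k.2 then orbit_proj k.1 *m Q_proj k.2 else 0.

Lemma signed_proj_orth k l :
  signed_proj k *m signed_proj l = if k == l then signed_proj k else 0.
Proof.
case: k l => i b [j c]; rewrite /signed_proj /=.
case keep_ib: (keep i b); last by rewrite mul0mx; case: ifP.
case keep_jc: (keep j c); last first.
  by rewrite mulmx0; case: eqP => // -[ij bc]; rewrite -ij -bc keep_ib in keep_jc.
rewrite mulmxA -(mulmxA (orbit_proj i)) -orbit_proj_Q_proj mulmxA orbit_proj_mul.
rewrite -mulmxA Q_proj_mul.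
case: eqP => [bc|nbc]; last by rewrite mulmx0; case: eqP => // -[_ /nbc].
case: ifP => ji; last by rewrite mul0mx; case: eqP => // -[ij _]; rewrite -ij mem_orbit_tau in ji.
by rewrite -bc in keep_jc; rewrite -bc (keep_orbit_tau keep_ib keep_jc ji) eqxx.
Qed.

Lemma sum_signed_proj (c : J -> F) b : (forall i, c (tau i) = c i) ->
  \sum_i c i *: signed_proj (i, b) = (\sum_i c i *: E i) *m Q_proj b.
Proof.
move=> c_tau; rewrite -(sum_keep b c_tau) mulmx_suml; apply: eq_bigr => i _.
by rewrite /signed_proj /=; case: ifP; rewrite ?scaler0 ?mul0mx // scalemxAl.
Qed.

Lemma sum_signed_proj1 b : \sum_i signed_proj (i, b) = Q_proj b.
Proof.
under eq_bigr do rewrite -[signed_proj _]scale1r.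
rewrite (@sum_signed_proj (fun=> 1)) //.
by under eq_bigr do rewrite scale1r; rewrite E_sum mul1mx.
Qed.

Lemma signed_proj_sum : \sum_k signed_proj k = 1%:M.
Proof. by rewrite big_pair_bool big_split /= !sum_signed_proj1 Q_proj_sum. Qed.

Lemma Q_mul_sum_E : Q *m (\sum_i lam i *: E i)
  = \sum_k ((-1) ^+ (~~ k.2) * lam k.1) *: signed_proj k.
Proof.
have QT : Q *m (\sum_i lam i *: E i) = (\sum_i lam i *: E i) *m Q.
  rewrite mulmx_sumr mulmx_suml [RHS](reindex_inj (can_inj tauK)) /=.
  by apply: eq_bigr => i _; rewrite -scalemxAr QE lam_tau scalemxAl.
rewrite big_pair_bool big_split /= QT.
under [X in _ = X + _]eq_bigr do rewrite expr0 mul1r.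
under [X in _ = _ + X]eq_bigr do rewrite expr1 mulN1r scaleNr.
rewrite sumrN !sum_signed_proj // -mulmxN -mulmxDr; congr (_ *m _).
by rewrite -[LHS]mulmx1 -Q_proj_sum mulmxDr !Q_Q_proj /= expr0 expr1 scale1r scaleN1r.
Qed.

Lemma signed_proj_idem k : signed_proj k *m signed_proj k = signed_proj k.
Proof. by rewrite signed_proj_orth eqxx. Qed.

Lemma rank_signed_proj i :
  (\rank (signed_proj (i, true)) + \rank (signed_proj (i, false)))%N = \rank (E i).
Proof.
apply/eqP; rewrite -(eqr_nat F) natrD -!mxtrace_idempotent ?signed_proj_idem ?E_orth ?eqxx //.
have [fixed|moved] := eqVneq (tau i) i.
  rewrite /signed_proj /keep fixed eqxx /= -mxtraceD -mulmxDr Q_proj_sum mulmx1.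
  by rewrite orbit_proj_fixed ?fixed.
have tr_PQ b : \tr (orbit_proj i *m Q_proj b) = \tr (E i).
  rewrite /Q_proj -scalemxAr mxtraceZ mulmxDr mulmx1 -scalemxAr mxtraceD mxtraceZ.
  have moved' : tau (tau i) != tau i by rewrite tauK eq_sym.
  rewrite orbit_proj_moved // mulmxDl !mxtraceD mxtrace_E_tau !mxtrace_E_Q //.
  by rewrite addr0 mulr0 addr0; field.
rewrite /signed_proj /keep /= (negbTE moved) /=.
by case: (_ < _)%N; rewrite /= !tr_PQ mxtrace0 ?addr0 ?add0r.
Qed.

Lemma sum_rank_signed_proj :
  ((\sum_i \rank (signed_proj (i, true))) * 2)%:R = n%:R + \tr Q.
Proof.
rewrite natrM natr_sum; under eq_bigr do rewrite -mxtrace_idempotent ?signed_proj_idem //.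
rewrite -raddf_sum /= sum_signed_proj1 /Q_proj mxtraceZ mxtraceD mxtrace1 /= expr0 scale1r.
by rewrite mulrC mulrA mulfV ?pnatr_eq0 ?mul1r.
Qed.

Theorem char_poly_Q_mul_sum_E : exists a : J -> nat,
  [/\ forall i, (a i <= \rank (E i))%N,
      char_poly (Q *m \sum_i lam i *: E i) =
        \prod_i (('X - (lam i)%:P) ^+ a i * ('X + (lam i)%:P) ^+ (\rank (E i) - a i)) &
      ((\sum_i a i) * 2)%:R = n%:R + \tr Q].
Proof.
exists (fun i => \rank (signed_proj (i, true))); split=> [i||].
- by rewrite -rank_signed_proj leq_addr.
- rewrite Q_mul_sum_E (char_poly_sum_orth_idem signed_proj_orth signed_proj_sum).
  rewrite big_pair_bool /=; apply: eq_bigr => i _.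
  by rewrite -rank_signed_proj addKn expr0 expr1 mul1r mulN1r polyCN opprK.
- exact: sum_rank_signed_proj.
Qed.
End SignedSpectrum.

Lemma zip_nseq (A B : Type) k (x : A) (y : B) : zip (nseq k x) (nseq k y) = nseq k (x, y).
Proof. by elim: k => //= k ->. Qed.

Section SignBlocks.
Variables (T : Type) (a m : T -> nat).
Hypothesis a_le_m : forall i, (a i <= m i)%N.

Definition sign_blocks (s : seq T) : seq bool :=
  flatten [seq nseq (a i) true ++ nseq (m i - a i) false | i <- s].

Lemma size_sign_blocks s :
  size (sign_blocks s) = size (flatten [seq nseq (m i) i | i <- s]).
Proof. by elim: s => //= i s IHs; rewrite !size_cat !size_nseq IHs subnKC. Qed.

Lemma count_sign_blocks s : count id (sign_blocks s) = \sum_(i <- s) a i.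
Proof.
elim: s => [|i s IHs]; first by rewrite big_nil.
by rewrite /= !count_cat IHs big_cons !count_nseq /= mul1n mul0n addn0.
Qed.

Lemma big_zip_sign_blocks (R : comPzSemiRingType) (F : bool * T -> R) s :
  \prod_(p <- zip (sign_blocks s) (flatten [seq nseq (m i) i | i <- s])) F p
    = \prod_(i <- s) (F (true, i) ^+ a i * F (false, i) ^+ (m i - a i)).
Proof.
elim: s => [|i s IHs]; first by rewrite !big_nil.
rewrite /= zip_cat ?size_cat ?size_nseq ?subnKC // big_cat IHs big_cons; congr (_ * _).
rewrite -{2}(subnKC (a_le_m i)) nseqD zip_cat ?size_nseq // !zip_nseq big_cat /=.
by rewrite !big_nseq !iter_mulr_1.
Qed.
End SignBlocks.


Section GroupKernels.
Variable gT : finGroupType.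
Local Notation n := #|gT|.
Local Notation G := [set: gT].

Definition kernel_mx (K : gT -> gT -> algC) : 'M[algC]_n :=
  \matrix_(i, j) K (vtx i) (vtx j).

Lemma sum_vtx (f : gT -> algC) : \sum_(k < n) f (vtx k) = \sum_x f x.
Proof. by rewrite /vtx -(big_enum_val (A := gT)). Qed.

Lemma eq_kernel_mx K1 K2 : K1 =2 K2 -> kernel_mx K1 = kernel_mx K2.
Proof. by move=> eK; apply/matrixP => i j; rewrite !mxE eK. Qed.

Lemma mul_kernel_mx K1 K2 :
  kernel_mx K1 *m kernel_mx K2 = kernel_mx (fun x y => \sum_z K1 x z * K2 z y).
Proof.
apply/matrixP => i j; rewrite !mxE -(sum_vtx (fun z => K1 (vtx i) z * K2 z (vtx j))).
by apply: eq_bigr => k _; rewrite !mxE.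
Qed.

Lemma mxtrace_kernel_mx K : \tr (kernel_mx K) = \sum_x K x x.
Proof. by rewrite /mxtrace -(sum_vtx (fun x => K x x)); apply: eq_bigr => k _; rewrite mxE. Qed.

Lemma kernel_mx_delta : kernel_mx (fun x y => (x == y)%:R) = 1%:M.
Proof. by apply/matrixP => i j; rewrite !mxE (inj_eq enum_val_inj). Qed.

Lemma kernel_mx0 : kernel_mx (fun _ _ => 0) = 0.
Proof. by apply/matrixP => i j; rewrite !mxE. Qed.

Lemma sum_kernel_mx (I : finType) (c : I -> algC) (K : I -> gT -> gT -> algC) :
  \sum_i c i *: kernel_mx (K i) = kernel_mx (fun x y => \sum_i c i * K i x y).
Proof.
by apply/matrixP => i j; rewrite !mxE summxE; apply: eq_bigr => k _; rewrite !mxE.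
Qed.

Lemma sum_delta (f : gT -> algC) a : \sum_z (z == a)%:R * f z = f a.
Proof. by rewrite (bigD1 a) //= eqxx mul1r big1 ?addr0 // => z /negbTE ->; rewrite mul0r. Qed.

Definition fun_mx (pi : gT -> gT) := kernel_mx (fun x y => (y == pi x)%:R).

Lemma fun_mx_mul pi K : fun_mx pi *m kernel_mx K = kernel_mx (fun x y => K (pi x) y).
Proof. by rewrite mul_kernel_mx; apply: eq_kernel_mx => x y; rewrite sum_delta. Qed.

Lemma mul_fun_mx pi K : involutive pi ->
  kernel_mx K *m fun_mx pi = kernel_mx (fun x y => K x (pi y)).
Proof.
move=> piK; rewrite mul_kernel_mx; apply: eq_kernel_mx => x y.
rewrite -(sum_delta (K x) (pi y)); apply: eq_bigr => z _.
by rewrite mulrC eq_sym (can2_eq piK piK).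
Qed.

Lemma fun_mx_invol pi : involutive pi -> fun_mx pi *m fun_mx pi = 1%:M.
Proof.
by move=> piK; rewrite fun_mx_mul -kernel_mx_delta; apply: eq_kernel_mx => x y; rewrite piK eq_sym.
Qed.

Lemma mxtrace_fun_mx pi : \tr (fun_mx pi) = #|[set g | g == pi g]|%:R.
Proof.
rewrite mxtrace_kernel_mx -sum1_card natr_sum [RHS]big_mkcond /=.
by apply: eq_bigr => x _; rewrite inE; case: (x == pi x).
Qed.

Lemma natr_card_neq0 : (n%:R : algC) != 0.
Proof. by rewrite pnatr_eq0 -lt0n; apply/card_gt0P; exists 1%g. Qed.

Lemma cfun_mulC (phi : 'CF(G)) a b : phi (a * b)%g = phi (b * a)%g.
Proof. by rewrite -(cfunJ _ (a * b)%g (in_setT a)) conjgE !mulgA mulVg mul1g. Qed.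

(* Right convolution by the central idempotent chi_i(1)/|G| sum_g chi_i(g^-1) g. *)
Definition irr_proj (i : Iirr G) :=
  kernel_mx (fun x y => 'chi_i 1%g / n%:R * 'chi_i (x^-1 * y)%g).

Lemma irr_convolution (i j : Iirr G) x y :
  \sum_z 'chi_i (x^-1 * z)%g * 'chi_j (z^-1 * y)%g
    = (i == j)%:R * (n%:R * ('chi_i (x^-1 * y)%g / 'chi_i 1%g)).
Proof.
have := generalized_orthogonality_relation (x^-1 * y)%g i j; rewrite cardsT => orth.
rewrite mulrCA -orth mulVKf ?natr_card_neq0 //.
rewrite (reindex_inj (mulgI y)) /= [RHS](eq_bigl xpredT) => [|u]; last by rewrite in_setT.
by apply: eq_bigr => u _; rewrite invMg -(mulgA u^-1)%g mulVg mulg1 mulgA cfun_mulC.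
Qed.

Lemma irr_proj_orth i j : irr_proj i *m irr_proj j = if i == j then irr_proj i else 0.
Proof.
rewrite mul_kernel_mx -kernel_mx0 -fun_if; apply: eq_kernel_mx => x y.
under eq_bigr do rewrite mulrACA.
rewrite -mulr_sumr irr_convolution; have [<-|_] := eqVneq i j; last by rewrite !mul0r mulr0.
by rewrite mul1r; field; rewrite natr_card_neq0 irr1_neq0.
Qed.

Lemma irr_proj_sum : \sum_i irr_proj i = 1%:M.
Proof.
rewrite -kernel_mx_delta -(eq_bigr _ (fun i _ => scale1r (irr_proj i))) sum_kernel_mx.
apply: eq_kernel_mx => x y.
have := congr1 (fun phi : 'CF(G) => phi (x^-1 * y)%g) (cfReg_sum G).
rewrite /= cfRegE sum_cfunE cardsT -eq_mulVg1 => reg.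
transitivity (n%:R^-1 * \sum_i ('chi[G]_i 1%g *: 'chi[G]_i) (x^-1 * y)%g).
  by rewrite mulr_sumr; apply: eq_bigr => i _; rewrite cfunE; field; rewrite natr_card_neq0.
by rewrite -reg; case: (x == y); rewrite ?mulr1n ?mulVf ?natr_card_neq0 ?mulr0n ?mulr0.
Qed.

Lemma mxtrace_irr_proj i : \tr (irr_proj i) = 'chi_i 1%g ^+ 2.
Proof.
rewrite mxtrace_kernel_mx; under eq_bigr do rewrite mulVg.
rewrite sumr_const (_ : #|_| = n) ?(eq_card (fun=> erefl)) //.
by rewrite -mulr_natr; field; rewrite natr_card_neq0.
Qed.

Lemma rank_irr_proj i : \rank (irr_proj i) = (Num.truncn ('chi_i 1%g) ^ 2)%N.
Proof.
apply/eqP; rewrite -(eqr_nat algC) -mxtrace_idempotent ?irr_proj_orth ?eqxx //.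
by rewrite mxtrace_irr_proj natrX truncnK ?Cnat_irr1.
Qed.

Definition cayley_mx (S : {set gT}) := kernel_mx (fun x y => ((x^-1 * y)%g \in S)%:R).

Section ConjugationClosed.
Variable S : {set gT}.
Hypothesis S_inv : forall s, s \in S -> (s^-1)%g \in S.
Hypothesis S_conj : forall s g, s \in S -> (s ^ g)%g \in S.

Lemma cfun_indicatorE z : cfun_indicator G S z = (z \in S)%:R.
Proof.
rewrite cfunElock genGid in_setT /=; congr (nat_of_bool _)%:R.
apply/subsetP/idP => [-> //|zS _ /imsetP[g _ ->]]; last exact: S_conj.
exact: class_refl.
Qed.

Lemma sum_inv_closed (f : gT -> algC) : \sum_(s in S) f (s^-1)%g = \sum_(s in S) f s.
Proof.
rewrite [RHS](reindex_inj invg_inj) /=; apply: eq_bigl => s.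
by apply/idP/idP => /S_inv; rewrite ?invgK.
Qed.

Lemma cfdot_indicator_irr i :
  '[cfun_indicator G S, 'chi_i] = n%:R^-1 * \sum_(s in S) 'chi_i s.
Proof.
rewrite cfdotE cardsT -sum_inv_closed; congr (_ * _); rewrite [RHS]big_mkcond /=.
apply: eq_big => [x|x _]; first by rewrite in_setT.
by rewrite cfun_indicatorE -irr_inv; case: (x \in S); rewrite ?mul1r ?mul0r.
Qed.

Lemma cayley_mx_irr_proj : cayley_mx S = \sum_i lam S i *: irr_proj i.
Proof.
rewrite sum_kernel_mx; apply: eq_kernel_mx => x y.
rewrite -cfun_indicatorE {1}(cfun_sum_cfdot (cfun_indicator G S)) sum_cfunE.
apply: eq_bigr => i _; rewrite cfunE cfdot_indicator_irr /lam.
by field; rewrite natr_card_neq0 irr1_neq0.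
Qed.
End ConjugationClosed.

Lemma pm_spectrum_char_poly (A : 'M[algC]_n) S (a : Iirr G -> nat) :
  (forall i, a i <= Num.truncn ('chi_i 1%g) ^ 2)%N ->
  char_poly A = \prod_i (('X - (lam S i)%:P) ^+ a i *
                         ('X + (lam S i)%:P) ^+ (Num.truncn ('chi_i 1%g) ^ 2 - a i)) ->
  pm_spectrum A S (2 * \sum_i a i).
Proof.
move=> a_le_m charA.
exists (sign_blocks a (fun i => Num.truncn ('chi_i 1%g) ^ 2)%N (enum (Iirr G))).
split; [exact: size_sign_blocks | split].
- rewrite charA big_zip_sign_blocks // big_enum /=; apply: eq_bigr => i _.
  by rewrite expr0 expr1 mul1r mulN1r polyCN opprK.
- by rewrite count_sign_blocks big_enum mulnC.
Qed.

Section TwistedCayley.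
Variables (S : {set gT}) (pi : gT -> gT) (tau : Iirr G -> Iirr G).
Hypothesis S_inv : forall s, s \in S -> (s^-1)%g \in S.
Hypothesis S_conj : forall s g, s \in S -> (s ^ g)%g \in S.
Hypothesis piK : involutive pi.
Hypothesis pi_mul : {morph pi : x y / (x * y)%g} \/ {morph pi : x y / (x * y)%g >-> (y * x)%g}.
Hypothesis pi_S : {mono pi : s / s \in S}.
Hypothesis chi_tau : forall i z, 'chi_(tau i) z = 'chi_i (pi z).

Lemma twist1 : pi 1%g = 1%g.
Proof. by apply: (mulgI (pi 1%g)); case: pi_mul => piM; rewrite -piM !mulg1. Qed.

Lemma twistV x : pi (x^-1)%g = (pi x)^-1%g.
Proof.
apply/eqP; rewrite eq_sym eq_invg_mul -twist1.
by case: pi_mul => piM; rewrite -piM ?mulgV ?mulVg.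
Qed.

Lemma irr_twistM (i : Iirr G) x y : 'chi_i (pi (x^-1 * pi y)%g) = 'chi_i ((pi x)^-1 * y)%g.
Proof. by case: pi_mul => piM; rewrite piM twistV piK // cfun_mulC. Qed.

Lemma tau_invol : involutive tau.
Proof. by move=> i; apply: irr_inj; apply/cfunP => z; rewrite !chi_tau piK. Qed.

Lemma fun_mx_irr_proj i : fun_mx pi *m irr_proj i = irr_proj (tau i) *m fun_mx pi.
Proof.
rewrite fun_mx_mul mul_fun_mx //; apply: eq_kernel_mx => x y.
by rewrite !chi_tau twist1 irr_twistM.
Qed.

Lemma lam_tau i : lam S (tau i) = lam S i.
Proof.
rewrite /lam chi_tau twist1 (eq_bigr _ (fun s _ => chi_tau i s)).
by rewrite [in RHS](reindex_inj (can_inj piK)) /=; congr (_ / _); apply: eq_bigl => s; rewrite pi_S.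
Qed.

Theorem pm_spectrum_twisted_cayley :
  pm_spectrum (fun_mx pi *m cayley_mx S) S (n + #|[set g | g == pi g]|).
Proof.
have [a [a_le charA sum_a]] := char_poly_Q_mul_sum_E irr_proj_orth irr_proj_sum
  tau_invol (fun_mx_invol piK) fun_mx_irr_proj lam_tau.
have -> : (n + #|[set g | g == pi g]|)%N = (2 * \sum_i a i)%N.
  by apply/eqP; rewrite -(eqr_nat algC) mulnC sum_a mxtrace_fun_mx natrD.
rewrite (cayley_mx_irr_proj S_inv S_conj).
apply: pm_spectrum_char_poly => [i|]; first by rewrite -rank_irr_proj.
by rewrite charA; apply: eq_bigr => i _; rewrite rank_irr_proj.
Qed.
End TwistedCayley.

Lemma adjmx_fun_mx_cayley (f c : gT -> gT -> gT) (pi : gT -> gT) (S : {set gT}) :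
  (forall x y s, (y == f x s) = (s == c x y)) ->
  (forall x y, (c x y \in S) = ((pi x)^-1 * y \in S)%g) ->
  adjmx f S = fun_mx pi *m cayley_mx S.
Proof.
move=> f_sol c_S; rewrite fun_mx_mul; apply/matrixP => i j; rewrite !mxE -c_S.
have -> : [set s in S | vtx j == f (vtx i) s] = S :&: [set c (vtx i) (vtx j)].
  by apply/setP => s; rewrite !inE f_sol.
have [cS|cS] := boolP (c (vtx i) (vtx j) \in S).
  by rewrite (setIidPr _) ?cards1 ?sub1set.
rewrite (_ : _ :&: _ = set0) ?cards0 //.
by apply/setP => s; rewrite !inE; case: eqP => [->|]; rewrite ?andbF ?(negbTE cS).
Qed.

Lemma conjC_IirrV (i : Iirr G) z : 'chi_(conjC_Iirr i) z = 'chi_i (z^-1)%g.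
Proof. by rewrite conjC_IirrE cfConjCE irr_inv. Qed.

Lemma perm_order2_involutive (sigma : {perm gT}) : #[sigma]%g = 2%N -> involutive sigma.
Proof.
move=> ord2 x; have : (sigma ^+ 2)%g x = x by rewrite -ord2 expg_order perm1.
by rewrite expgS expg1 permM.
Qed.

Section Automorphism.
Variable sigma : {perm gT}.
Hypothesis sigma_aut : sigma \in Aut G.

Lemma aut_morphM : {morph sigma : x y / (x * y)%g}.
Proof. by move=> x y; rewrite -!(autmE sigma_aut) morphM ?in_setT. Qed.

Lemma aut_morphV : {morph sigma : x / (x^-1)%g}.
Proof. by move=> x; rewrite -!(autmE sigma_aut) morphV ?in_setT. Qed.

Lemma exists_irr_aut : exists tau : Iirr G -> Iirr G,
  forall i z, 'chi_(tau i) z = 'chi_i (sigma^-1 z)%g.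
Proof.
have isoG : isom G G (autm sigma_aut) by apply/isomP; split; [exact: injm_autm | exact: im_autm].
exists (isom_Iirr isoG) => i z.
have sigma_inv : autm sigma_aut ((sigma^-1)%g z) = z by rewrite autmE permKV.
by rewrite isom_IirrE -{1}sigma_inv cfIsomE ?in_setT.
Qed.
End Automorphism.

Lemma pm_spectrum_caysum (S : {set gT}) :
  (forall s, s \in S -> (s^-1)%g \in S) -> (forall s g, s \in S -> (s ^ g)%g \in S) ->
  pm_spectrum (adjmx (@caysum_edge gT) S) S (n + #|[set g : gT | g == (g^-1)%g]|).
Proof.
move=> S_inv S_conj.
have edge_sol (x y s : gT) : (y == caysum_edge x s) = (s == x * y)%g.
  by apply/eqP/eqP => ->; rewrite /caysum_edge ?mulKVg ?mulKg.
rewrite (adjmx_fun_mx_cayley (pi := invg) edge_sol) => [|x y]; last by rewrite invgK.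
apply: (pm_spectrum_twisted_cayley (tau := conjC_Iirr (G := G))) => //.
- exact: invgK.
- by right; apply: invMg.
- by move=> s; apply/idP/idP => /S_inv; rewrite ?invgK.
- exact: conjC_IirrV.
Qed.

Section InvolutiveAutomorphism.
Variables (sigma : {perm gT}) (S : {set gT}).
Hypothesis sigma_aut : sigma \in Aut G.
Hypothesis sigmaK : involutive sigma.
Hypothesis sigma_S : sigma @: S = S.
Hypothesis S_inv : forall s, s \in S -> (s^-1)%g \in S.
Hypothesis S_conj : forall s g, s \in S -> (s ^ g)%g \in S.

Let sigmaM := aut_morphM sigma_aut.
Let sigmaV := aut_morphV sigma_aut.

Lemma aut_mono_S : {mono sigma : s / s \in S}.
Proof. by move=> s; rewrite -{1}sigma_S mem_imset //; apply: perm_inj. Qed.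

Lemma exists_irr_aut_invol : exists tau : Iirr G -> Iirr G,
  forall i z, 'chi_(tau i) z = 'chi_i (sigma z).
Proof.
have [tau chi_tau] := exists_irr_aut sigma_aut.
by exists tau => i z; rewrite chi_tau -{1}(sigmaK z) permK.
Qed.

Lemma pm_spectrum_tcay :
  pm_spectrum (adjmx (tcay_edge sigma) S) S (n + #|[set g | g == sigma g]|).
Proof.
have edge_sol (x y s : gT) : (y == tcay_edge sigma x s) = (s == x^-1 * sigma y)%g.
  by apply/eqP/eqP => ->; rewrite /tcay_edge ?sigmaK ?mulKg // mulKVg sigmaK.
rewrite (adjmx_fun_mx_cayley (pi := sigma) edge_sol) => [|x y]; last first.
  by rewrite -aut_mono_S sigmaM sigmaV sigmaK.
have [tau chi_tau] := exists_irr_aut_invol.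
exact: (pm_spectrum_twisted_cayley S_inv S_conj sigmaK (or_introl sigmaM) aut_mono_S chi_tau).
Qed.

Lemma pm_spectrum_tcaysum :
  pm_spectrum (adjmx (tcaysum_edge sigma) S) S (n + #|[set g | g == ((sigma g)^-1)%g]|).
Proof.
have edge_sol (x y s : gT) : (y == tcaysum_edge sigma x s) = (s == x * sigma y)%g.
  by apply/eqP/eqP => ->; rewrite /tcaysum_edge ?sigmaK ?mulKVg // mulKg sigmaK.
rewrite (adjmx_fun_mx_cayley (pi := fun x => ((sigma x)^-1)%g) edge_sol) => [|x y]; last first.
  by rewrite -aut_mono_S sigmaM sigmaK invgK.
have [tau chi_tau] := exists_irr_aut_invol.
apply: (pm_spectrum_twisted_cayley (tau := fun i => conjC_Iirr (tau i))) => //.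
- by move=> x; rewrite sigmaV sigmaK invgK.
- by right => x y; rewrite sigmaM invMg.
- by move=> s; rewrite -[RHS]aut_mono_S; apply/idP/idP => /S_inv; rewrite ?invgK.
- by move=> i z; rewrite conjC_IirrV chi_tau sigmaV.
Qed.
End InvolutiveAutomorphism.
End GroupKernels.

Unset Implicit Arguments.

Theorem theorem3p1 (gT : finGroupType) (sigma : {perm gT}) (S : {set gT}) :
  (4 <= #|gT|)%N ->
  sigma \in Aut [set: gT] -> #[sigma]%g = 2%N ->
  (forall s, s \in S -> (s^-1)%g \in S) ->
  (forall s g, s \in S -> (s ^ g)%g \in S) ->
  pm_spectrum (adjmx (@caysum_edge gT) S) S
    (#|gT| + #|[set g : gT | g == (g^-1)%g]|)%N /\
  (sigma @: S = S ->
    pm_spectrum (adjmx (tcay_edge sigma) S) S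
      (#|gT| + #|[set g : gT | g == sigma g]|)%N /\
    pm_spectrum (adjmx (tcaysum_edge sigma) S) S
      (#|gT| + #|[set g : gT | g == ((sigma g)^-1)%g]|)%N).
Proof.
move=> _ sigma_aut /perm_order2_involutive sigmaK S_inv S_conj.
split; first exact: pm_spectrum_caysum.
by move=> sigma_S; split; [apply: pm_spectrum_tcay | apply: pm_spectrum_tcaysum].
Qed.
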